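(* If $E\subseteq\mathbb{R}$ is a non-empty weakly nowhere dense $G_\delta$ set, then there exist points $x\in E$ which are neither left density points nor right density points of $E$.
   Context: $|A|$ denotes Lebesgue measure. A set $E\subseteq\mathbb{R}$ is weakly nowhere dense if for every (nondegenerate) interval $J$ the set $E\cap J$ does not have full measure in $J$. A point $x$ is a left (resp. right) density point of $E$ if for every sequence of intervals $I_n=[x-r_n,x]$ (resp. $I_n=[x,x+r_n]$) with $r_n\searrow0$ we have $|E\cap I_n|/|I_n|\to1$. *)

From HB Require Import structures.
From mathcomp Require Import all_boot all_order all_algebra.
From mathcomp Require Import all_classical all_reals all_analysis borel_hierarchy.
Set Implicit Arguments. Unset Strict Implicit. Unset Printing Implicit Defensive.
Import Order.TTheory GRing.Theory Num.Theory.
Import numFieldNormedType.Exports.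
Local Open Scope classical_set_scope.
Local Open Scope ring_scope.

(* E is weakly nowhere dense: for every nondegenerate interval J, E ∩ J does
   not have full measure in J, i.e. |E ∩ J| < |J|.  It suffices (and is
   equivalent) to range over closed bounded intervals [a,b], a < b. *)
Definition weakly_nowhere_dense {R : realType} (E : set R) : Prop :=
  forall a b : R, a < b ->
    (lebesgue_measure (E `&` `[a, b]) < (b - a)%:E)%E.

Definition left_density_point {R : realType} (E : set R) (x : R) : Prop :=
  forall r : R^nat, (forall n, 0 < r n) -> nonincreasing_seq r ->
    r @ \oo --> (0 : R) ->
    (fun n => fine (lebesgue_measure (E `&` `[x - r n, x])) / r n) @ \oo --> (1 : R).

Definition right_density_point {R : realType} (E : set R) (x : R) : Prop :=
  forall r : R^nat, (forall n, 0 < r n) -> nonincreasing_seq r ->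
    r @ \oo --> (0 : R) ->
    (fun n => fine (lebesgue_measure (E `&` `[x, x + r n])) / r n) @ \oo --> (1 : R).

(* A G_delta set E is measurable and E = ⋂_n O_n with O_n open.  As E never
   has full measure in an interval, the Lebesgue density theorem yields, close
   to any point of E, a point z outside E at which E has density 0; looking at
   E to the left of z one finds points y of E as close as wanted to the given
   one and radii r as small as wanted with |E ∩ [y, y + r]| < r/2, and by the
   reflection x ↦ -x also with |E ∩ [y - r, y]| < r/2.  These estimates
   survive, with 3r/4 instead of r/2, when y moves by at most r/8, which gives
   a closed interval inside O_n, meeting E, all of whose points admit a left
   and a right radius smaller than 1/(n+1) with relative measure at most 3/4.
   Iterating in nested intervals produces a point of ⋂_n O_n = E with radii
   decreasing to 0 along which both one-sided density ratios stay <= 3/4. *)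

From mathcomp Require Import all_boot all_order all_algebra.
From mathcomp Require Import all_classical all_reals all_analysis borel_hierarchy.
From mathcomp Require Import measurable_realfun lra.
Set Implicit Arguments. Unset Strict Implicit. Unset Printing Implicit Defensive.
Import Order.TTheory GRing.Theory Num.Theory.
Import numFieldNormedType.Exports.
Local Open Scope classical_set_scope.
Local Open Scope ring_scope.

Section measure_of_intervals.
Context {R : realType}.
Local Notation mu := (@lebesgue_measure R).

Lemma lebesgue_measure_cc (a b : R) : a <= b -> mu `[a, b] = (b - a)%:E.
Proof.
move=> ab; rewrite lebesgue_measure_itv /= lte_fin.
case: ltP => [_|ba]; first by rewrite EFinB.
suff -> : a = b by rewrite subrr.
by apply/eqP; rewrite eq_le ab ba.
Qed.

Lemma measureIcc_widen (E : set R) (a b d : R) : measurable E -> 0 <= d ->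
  a <= b -> (mu (E `&` `[(a - d)%R, (b + d)%R]) <= mu (E `&` `[a, b]) + (d *+ 2)%:E)%E.
Proof.
move=> mE d0 ab.
have mI c c' : measurable (E `&` `[c, c']) by exact: measurableI.
have cover : E `&` `[a - d, b + d] `<=` `[a - d, a] `|` (E `&` `[a, b]) `|` `[b, b + d].
  move=> x [Ex]; rewrite /= !in_itv /= => /andP[adx xbd].
  have [xa|ax] := leP x a; first by left; left; rewrite adx.
  have [xb|bx] := leP x b; first by left; right; rewrite (ltW ax).
  by right; rewrite (ltW bx).
have mU : measurable (`[a - d, a] `|` (E `&` `[a, b])) by exact: measurableU.
apply: (le_trans (le_measure mu _ _ cover)); rewrite ?inE; [exact: mI|exact: measurableU|].
apply: (le_trans (measureU2 mu mU (measurable_itv _))).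
apply: (le_trans (leeD (measureU2 mu (measurable_itv _) (mI a b)) (lexx _))).
rewrite /= !lebesgue_measure_cc; [|lra|lra].
by rewrite addeAC -EFinD addeC; apply: leeD => //; rewrite lee_fin; lra.
Qed.

End measure_of_intervals.

Lemma minr_gt0_le {R : realDomainType} (p q : R) : 0 < p -> 0 < q ->
  [/\ 0 < Num.min p q, Num.min p q <= p & Num.min p q <= q].
Proof. by move=> p0 q0; rewrite lt_min p0 q0 !ge_min !lexx orbT. Qed.

Section sparse_intervals.
Context {R : realType}.
Local Notation mu := (@lebesgue_measure R).
Variable E : set R.
Hypothesis mE : measurable E.

Lemma exists_density0_point (u v : R) : u < v ->
  (mu (E `&` `[u, v]) < (v - u)%:E)%E ->
  exists z, [/\ u <= z <= v, ~ E z &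
    (mu (E `&` ball z r) * (mu (ball z r))^-1)%E @[r --> 0^'+] --> 0%:E].
Proof.
move=> uv Euv; have [N [mN N0 densN]] := lebesgue_density mE.
apply: contrapT => nodens.
have cover : `[u, v] `<=` (E `&` `[u, v]) `|` N.
  move=> x uvx; have [Ex|nEx] := pselect (E x); [by left|right].
  apply: densN => /= densx; apply: nodens; exists x; split => //.
  by move: densx; rewrite indicE memNset.
have mEuv : measurable (E `&` `[u, v]) by exact: measurableI.
have : (mu `[u, v] <= mu (E `&` `[u, v]) + mu N)%E.
  apply: (le_trans _ (measureU2 mu mEuv mN)).
  by apply: le_measure; rewrite ?inE //; exact: measurableU.
rewrite /= lebesgue_measure_cc ?(ltW uv) // N0 adde0.
by move=> /le_lt_trans/(_ Euv); rewrite ltxx.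
Qed.

Lemma density0_small_ball (z : R) :
  (mu (E `&` ball z r) * (mu (ball z r))^-1)%E @[r --> 0^'+] --> 0%:E ->
  forall b, 0 < b -> exists s, [/\ 0 < s, s < b & (mu (E `&` ball z s) < (s / 4)%:E)%E].
Proof.
move=> dens0 b b0.
have small : \forall r \near 0^'+, (mu (E `&` ball z r) * (mu (ball z r))^-1 < (1 / 8)%:E)%E.
  by apply: (dens0 [set x | (x < (1 / 8)%:E)%E]); apply: open_ereal_lt'; rewrite lte_fin; lra.
have [s [[s0 sb] hs]] :=
  filter_ex (filterI (filterI (nbhs_right_gt 0) (nbhs_right_lt b0)) small).
exists s; split => //; move: hs.
have Eball_fin : mu (E `&` ball z s) \is a fin_num.
  rewrite ge0_fin_numE //; apply: (le_lt_trans (le_measure mu _ _ (@subIsetr _ E _))).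
  - by rewrite inE; apply: measurableI => //; exact: measurable_ball.
  - by rewrite inE; exact: measurable_ball.
  - by rewrite /= lebesgue_measure_ball ?ltry // ltW.
rewrite lebesgue_measure_ball ?(ltW s0) // -(fineK Eball_fin) inver mulrn_eq0 /=.
rewrite gt_eqF // -EFinM !lte_fin ltr_pdivrMr ?mulrn_wgt0 // mulr2n; lra.
Qed.

Hypothesis wndE : weakly_nowhere_dense E.

Lemma sparse_right_interval (x0 eta rho : R) : E x0 -> 0 < eta -> 0 < rho ->
  exists y r, [/\ E y, x0 <= y < x0 + eta, 0 < r, r < rho &
    (mu (E `&` `[y, (y + r)%R]) < (r / 2)%:E)%E].
Proof.
move=> Ex0 eta0 rho0; have [m0 m_eta m_rho] := minr_gt0_le eta0 rho0.
set h := Num.min eta rho / 2.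
have [h0 h_eta h_rho] : [/\ 0 < h, h < eta & h < rho] by rewrite /h; split; lra.
have x0h : x0 < x0 + h by lra.
have [z [/andP[x0z zh] nEz dens0]] := exists_density0_point x0h (wndE x0h).
have neq_z w : E w -> w != z by apply: contraPneq => ->.
have {}x0z : x0 < z by rewrite lt_neqAle neq_z.
pose S := E `&` `[x0, z].
have Sx0 : S x0 by split; rewrite //= in_itv /= lexx ltW.
have S_le_z : ubound S z by move=> w [_]; rewrite /= in_itv => /andP[].
have supS : has_sup S by split; [exists x0 | exists z].
have le_supS : ubound S (sup S) := ub_le_sup supS.2.
have supS_le := ge_sup supS.1 S_le_z.
(* Either E has a gap (sup S, z] before z, or it accumulates at z from the
   left, where its density is 0. *)
have [tz|zt] := ltP (sup S) z.
- have gap0 : 0 < (z - sup S) / 2 by lra.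
  have [e [Ee /= /[!in_itv] /= /andP[x0e ez]] te] := sup_adherent gap0 supS.
  have eS : e <= sup S by apply: le_supS; split; rewrite //= in_itv /= x0e.
  exists e, (z - e); split => //; [apply/andP; split; lra|lra|lra|].
  have -> : e + (z - e) = z by lra.
  apply: (le_lt_trans (le_measure mu _ _ (_ : _ `<=` `[e, sup S]))).
  + by rewrite inE; exact: measurableI.
  + by rewrite inE.
  + move=> w [Ew]; rewrite /= !in_itv /= => /andP[ew wz]; rewrite ew /=.
    by apply: le_supS; split; rewrite //= in_itv /= wz andbT; lra.
  + by rewrite /= lebesgue_measure_cc // lte_fin; lra.
- have {zt supS_le} supSz : sup S = z by apply: le_anti; rewrite supS_le.
  have [s [s0 sh Es]] := density0_small_ball dens0 h0.
  have s20 : 0 < s / 2 by lra.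
  have [e [Ee /= /[!in_itv] /= /andP[x0e ez]]] := sup_adherent s20 supS.
  rewrite supSz => ze.
  have {}ez : e < z by rewrite lt_neqAle neq_z.
  exists e, (z - e + s / 2); split => //; [apply/andP; split; lra|lra|lra|].
  apply: (le_lt_trans (le_measure mu _ _ (_ : _ `<=` E `&` ball z s))).
  + by rewrite inE; exact: measurableI.
  + by rewrite inE; apply: measurableI => //; exact: measurable_ball.
  + apply: setIS => w; rewrite ball_itv /= !in_itv /= => /andP[ew we].
    by apply/andP; split; lra.
  + by apply: (lt_trans Es); rewrite lte_fin; lra.
Qed.

End sparse_intervals.

Section reflection.
Context {R : realType}.
Local Notation mu := (@lebesgue_measure R).

Lemma lebesgue_measure_oppr_preimageIcc (E : set R) (a b : R) : measurable E ->
  mu ((-%R @^-1` E) `&` `[a, b]) = mu (E `&` `[- b, - a]).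
Proof.
move=> mE; rewrite -[RHS]lebesgue_measureN; last exact: measurableI.
by rewrite /pushforward preimage_setI opp_preimage_itvbndbnd /= !opprK.
Qed.

Lemma sparse_left_interval (E : set R) (x0 eta rho : R) : measurable E ->
  weakly_nowhere_dense E -> E x0 -> 0 < eta -> 0 < rho ->
  exists y r, [/\ E y, x0 - eta < y <= x0, 0 < r, r < rho &
    (mu (E `&` `[(y - r)%R, y]) < (r / 2)%:E)%E].
Proof.
move=> mE wndE Ex0 eta0 rho0; pose F := -%R @^-1` E.
have muF a b : mu (F `&` `[a, b]) = mu (E `&` `[- b, - a]).
  exact: lebesgue_measure_oppr_preimageIcc.
have mF : measurable F by rewrite -[F]setTI; exact: oppr_measurable.
have wndF : weakly_nowhere_dense F.
  by move=> a b ab; rewrite muF (_ : b - a = - a - - b) ?wndE ?ltrN2 //; lra.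
have Fx0 : F (- x0) by rewrite /F /= opprK.
have [y [r [Fy /andP[x0y yx0] r0 r_rho Fr]]] :=
  sparse_right_interval mF wndF Fx0 eta0 rho0.
exists (- y), r; split => //; first by apply/andP; split; lra.
by move: Fr; rewrite muF opprD.
Qed.

End reflection.

Section sparse_points.
Context {R : realType}.
Local Notation mu := (@lebesgue_measure R).
Variable E : set R.
Hypothesis mE : measurable E.

Definition left_sparse (x r : R) := (mu (E `&` `[(x - r)%R, x]) <= (r * 3 / 4)%:E)%E.
Definition right_sparse (x r : R) := (mu (E `&` `[x, (x + r)%R]) <= (r * 3 / 4)%:E)%E.

Lemma measureIcc_shift (a w r d : R) : 0 <= r -> a - d <= w <= a + d ->
  (mu (E `&` `[w, (w + r)%R]) <= mu (E `&` `[a, (a + r)%R]) + (d *+ 2)%:E)%E.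
Proof.
move=> r0 /andP[adw wad]; have d0 : 0 <= d by lra.
apply: le_trans (measureIcc_widen mE d0 (_ : a <= a + r)); last lra.
apply: le_measure; rewrite ?inE; [exact: measurableI|exact: measurableI|].
by apply: setIS => x; rewrite /= !in_itv /= => /andP[wx xwr]; apply/andP; split; lra.
Qed.

Lemma right_sparse_near (y r w : R) : 0 < r ->
  (mu (E `&` `[y, (y + r)%R]) < (r / 2)%:E)%E -> y - r / 8 <= w <= y + r / 8 ->
  right_sparse w r.
Proof.
move=> r0 Er wy; apply: le_trans (measureIcc_shift (ltW r0) wy) _.
by apply: le_trans (leeD (ltW Er) (lexx _)) _; rewrite -EFinD lee_fin; lra.
Qed.

Lemma left_sparse_near (y r w : R) : 0 < r ->
  (mu (E `&` `[(y - r)%R, y]) < (r / 2)%:E)%E -> y - r / 8 <= w <= y + r / 8 ->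
  left_sparse w r.
Proof.
move=> r0 Er /andP[wl wr].
have shift x : `[x - r, x]%classic = `[x - r, x - r + r]%classic by rewrite subrK.
rewrite /left_sparse shift; rewrite shift in Er.
by apply: right_sparse_near Er _ => //; apply/andP; split; lra.
Qed.

Hypothesis wndE : weakly_nowhere_dense E.

Lemma sparse_step (x0 eta rhoL rhoR : R) : E x0 -> 0 < eta -> 0 < rhoL -> 0 < rhoR ->
  exists c d rL rR, [/\ E c /\ 0 < d, x0 - eta <= c - d /\ c + d <= x0 + eta,
    0 < rL < rhoL, 0 < rR < rhoR &
    forall w, c - d <= w <= c + d -> left_sparse w rL /\ right_sparse w rR].
Proof.
move=> Ex0 eta0 rhoL0 rhoR0; have eta20 : 0 < eta / 2 by lra.
have [y [rL [Ey /andP[y_gt y_le] rL0 rL_lt ErL]]] :=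
  sparse_left_interval mE wndE Ex0 eta20 rhoL0.
have rL80 : 0 < rL / 8 by lra.
have [e0 e_rL e_eta] := minr_gt0_le rL80 eta20.
set e := Num.min _ _ in e0 e_rL e_eta.
have [c [rR [Ec /andP[y_c c_lt] rR0 rR_lt ErR]]] := sparse_right_interval mE wndE Ey e0 rhoR0.
have rR80 : 0 < rR / 8 by lra.
have ce0 : 0 < y + e - c by lra.
have [d0 d_rR d_ce] := minr_gt0_le rR80 ce0.
set d := Num.min _ _ in d0 d_rR d_ce.
exists c, d, rL, rR; split; [by []|split; lra|by rewrite rL0|by rewrite rR0|].
move=> w /andP[cdw wcd]; split.
- by apply: left_sparse_near ErL _ => //; apply/andP; split; lra.
- by apply: right_sparse_near ErR _ => //; apply/andP; split; lra.
Qed.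

End sparse_points.

Lemma nested_itv_common_point {R : realType} (A B : R ^nat) :
  nondecreasing_seq A -> nonincreasing_seq B -> (forall n, A n <= B n) ->
  exists x, forall n, A n <= x <= B n.
Proof.
move=> ndA niB AB.
have AleB n m : A n <= B m.
  apply: le_trans (ndA _ _ (leq_maxl n m)) _.
  exact: le_trans (AB _) (niB _ _ (leq_maxr n m)).
exists (sup (range A)) => n; apply/andP; split.
- by apply: ub_le_sup; [exists (B 0%N) => _ [m _ <-] | exists n].
- by apply: ge_sup; [exists (A 0%N), 0%N | move=> _ [m _ <-]].
Qed.

Lemma density_ratio_not_cvg1 {R : realType} (I : (set R) ^nat) (r : R ^nat) :
  (forall n, 0 < r n) -> (forall n, (lebesgue_measure (I n) <= (r n * 3 / 4)%:E)%E) ->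
  ~ (fun n => fine (lebesgue_measure (I n)) / r n) @ \oo --> (1 : R).
Proof.
move=> r0 Ir; have q0 : 0 < 1 / 4 :> R by lra.
move=> /cvgrPdist_lt/(_ _ q0)/filter_ex[n].
have Ifin : lebesgue_measure (I n) \is a fin_num.
  by rewrite ge0_fin_numE // (le_lt_trans (Ir n)) ?ltry.
have : fine (lebesgue_measure (I n)) / r n <= 3 / 4.
  by rewrite ler_pdivrMr //; have := Ir n; rewrite -(fineK Ifin) lee_fin; lra.
by rewrite ltr_norml => ratio /andP[]; lra.
Qed.

Definition sparse_radii {R : realType} (P : R -> R -> Prop) (x : R) (r : R ^nat) :=
  [/\ forall n, 0 < r n, nonincreasing_seq r, r @ \oo --> 0 & forall n, P x (r n)].

Lemma lt_harmonic_cvg0 {R : realType} (r : R ^nat) : (forall n, 0 < r n) -> (forall n, r n < n.+1%:R^-1) ->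
  r @ \oo --> 0.
Proof.
move=> r0 r_lt; apply: (squeeze_cvgr _ (cvg_cst 0) cvg_harmonic).
by apply: nearW => n; rewrite ltW //= ltW.
Qed.

Section nested_construction.
Context {R : realType}.
Variable E : set R.
Hypotheses (mE : measurable E) (wndE : weakly_nowhere_dense E).
Variable O : (set R) ^nat.
Hypotheses (oO : forall n, open (O n)) (EO : forall n, E `<=` O n).

Record stage := Stage { ctr : R; rad : R; radL : R; radR : R }.

Definition admissible (s : stage) := [/\ E (ctr s), 0 < rad s, 0 < radL s & 0 < radR s].

Definition refines n (s t : stage) :=
  [/\ ctr s - rad s <= ctr t - rad t /\ ctr t + rad t <= ctr s + rad s,
      `[ctr t - rad t, ctr t + rad t] `<=` O n,
      radL t <= radL s /\ radL t < n.+1%:R^-1,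
      radR t <= radR s /\ radR t < n.+1%:R^-1 &
      forall w, ctr t - rad t <= w <= ctr t + rad t ->
        left_sparse E w (radL t) /\ right_sparse E w (radR t)].

Lemma refine_stage n s : admissible s -> exists2 t, admissible t & refines n s t.
Proof.
case: s => c eta rL rR [/= Ec eta0 rL0 rR0].
have /nbhs_ballP[e /= e0 ballO] : nbhs c (O n) by apply: open_nbhs_nbhs; split => //; exact: EO.
have e20 : 0 < e / 2 by lra.
have [eta'0 eta'_eta eta'_e] := minr_gt0_le eta0 e20.
have n0 : 0 < n.+1%:R^-1 :> R by rewrite invr_gt0.
have [rhoL0 rhoL_rL rhoL_n] := minr_gt0_le rL0 n0.
have [rhoR0 rhoR_rR rhoR_n] := minr_gt0_le rR0 n0.
have [c' [d [rL' [rR' [[Ec' d0] [lo hi] /andP[rL'0 rL'_lt] /andP[rR'0 rR'_lt] sparse]]]]] :=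
  sparse_step mE wndE Ec eta'0 rhoL0 rhoR0.
exists (Stage c' d rL' rR'); split => //=; first by split; lra.
- move=> w; rewrite /= in_itv /= => /andP[lw wh]; apply: ballO.
  by rewrite ball_itv /= in_itv /=; apply/andP; split; lra.
- by split; [exact: le_trans (ltW rL'_lt) rhoL_rL|exact: lt_le_trans rL'_lt rhoL_n].
- by split; [exact: le_trans (ltW rR'_lt) rhoR_rR|exact: lt_le_trans rR'_lt rhoR_n].
Qed.

Lemma exists_two_sided_sparse_point x0 : E x0 ->
  exists x, [/\ forall n, O n x, exists r, sparse_radii (left_sparse E) x r &
                                 exists r, sparse_radii (right_sparse E) x r].
Proof.
move=> Ex0.
have /choice[next nextP] : forall ns : nat * stage,
    exists t, admissible ns.2 -> admissible t /\ refines ns.1 ns.2 t.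
  move=> [n s]; have [/(refine_stage n)[t]|] := pselect (admissible s).
    by exists t.
  by exists s.
pose s := fix s n := if n is k.+1 then next (k, s k) else Stage x0 1 1 1.
have adm n : admissible (s n).
  by elim: n => [|n IH]; [split => //= | have [] := nextP (n, s n) IH].
have ref n : refines n (s n) (s n.+1) by have [] := nextP (n, s n) (adm n).
have [x Ix] : exists x, forall n, ctr (s n) - rad (s n) <= x <= ctr (s n) + rad (s n).
  apply: nested_itv_common_point.
  - by apply/nondecreasing_seqP => n; have [[]] := ref n.
  - by apply/nonincreasing_seqP => n; have [[]] := ref n.
  - by move=> n; have [_ rad0 _ _] := adm n; lra.
exists x; split.
- move=> n; have [_ sub _ _ _] := ref n; apply: sub.
  by move: (Ix n.+1); rewrite /= in_itv.
- exists (fun n => radL (s n.+1)); split.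
  + by move=> n; have [] := adm n.+1.
  + by apply/nonincreasing_seqP => n; have [_ _ [] ] := ref n.+1.
  + by apply: lt_harmonic_cvg0 => n; [have [] := adm n.+1 | have [_ _ []] := ref n].
  + by move=> n; have [_ _ _ _ /(_ x (Ix n.+1))[]] := ref n.
- exists (fun n => radR (s n.+1)); split.
  + by move=> n; have [] := adm n.+1.
  + by apply/nonincreasing_seqP => n; have [_ _ _ [] ] := ref n.+1.
  + by apply: lt_harmonic_cvg0 => n; [have [] := adm n.+1 | have [_ _ _ []] := ref n].
  + by move=> n; have [_ _ _ _ /(_ x (Ix n.+1))[]] := ref n.
Qed.

End nested_construction.

Unset Implicit Arguments.

Theorem corollary3p5 (R : realType) (E : set R) :
  E !=set0 -> weakly_nowhere_dense E -> Gdelta E ->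
  exists x, E x /\ ~ left_density_point E x /\ ~ right_density_point E x.
Proof.
move=> [x0 Ex0] wndE GdE; have mE := Gdelta_measurable GdE.
case: GdE => O oO EO.
have E_sub_O n : E `<=` O n by rewrite EO => y /(_ n I).
have [x [Ox [rL [rL0 niL cvgL sparseL]] [rR [rR0 niR cvgR sparseR]]]] :=
  exists_two_sided_sparse_point mE wndE oO E_sub_O Ex0.
exists x; split; first by rewrite EO => n _; exact: Ox.
split.
- by move=> /(_ rL rL0 niL cvgL); apply: density_ratio_not_cvg1 rL0 sparseL.
- by move=> /(_ rR rR0 niR cvgR); apply: density_ratio_not_cvg1 rR0 sparseR.
Qed.
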